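(* Let $M$ be a commutative and cocommutative Hopf algebra over $\mathbb{C}$ and $A$ a commutative $\mathbb{C}$-algebra. Let $r$ be an $A$-valued bicharacter on $M$ with symmetrization $s=r\circ r^t$, and let $s_1$ be any symmetric $A$-valued bicharacter on $M$. Put $s_2=s\circ s_1$. Then for all $a,b\in M$, \[ \mathrm{EQ}_{r}(a\bullet_{s_1}b)=\mathrm{EQ}_{r}(a)\bullet_{s_2}\mathrm{EQ}_{r}(b). \]
   Context: For a Hopf algebra $M$ with coproduct $\Delta$ and counit $\eta$, Sweedler notation: $\Delta(a)=\sum a'\otimes a''$, $\Delta^2(a)=\sum a'\otimes a''\otimes a'''$. An $A$-valued bicharacter on $M$ is a linear map $r:M\otimes M\to A$ with $r(1\otimes a)=\eta(a)=r(a\otimes 1)$, $r(ab\otimes c)=\sum r(a\otimes c')r(b\otimes c'')$, $r(a\otimes bc)=\sum r(a'\otimes b)r(a''\otimes c)$ for all $a,b,c\in M$. Convolution: $(r\circ t)(a\otimes b)=\sum r(a'\otimes b')t(a''\otimes b'')$; $r^t(a\otimes b)=r(b\otimes a)$; $t$ is symmetric if $t=t^t$; the symmetrization of $r$ is $r\circ r^t$. $M_A=M\otimes_{\mathbb{C}}A$. For a symmetric bicharacter $t$, $\bullet_t$ is the $A$-bilinear product on $M_A$ extending $a\bullet_t b=\sum a'b'\,t(a''\otimes b'')$. $\mathrm{EQ}_r:M\to M_A$, $\mathrm{EQ}_r(m)=\sum r(m'\otimes m'')m'''$, extended $A$-linearly to $M_A$. *)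

(* Hopf algebras over C (= complex numbers over Stdlib's
   real numbers, as a mathcomp fieldType), encoded with Sweedler-style
   representatives of coproducts. *)
From HB Require Import structures.
From mathcomp Require Import all_boot all_order all_algebra.
From mathcomp Require Import Rstruct.
From mathcomp Require Import complex.

Set Implicit Arguments.
Unset Strict Implicit.
Unset Printing Implicit Defensive.
Import GRing.Theory.
Local Open Scope ring_scope.

Notation CC := (complex Rdefinitions.R).

(** An element of U (x) W is represented by a finite formal sum
    [s : seq (U * W)] standing for \sum_(p <- s) p.1 (x) p.2.
    Two such sums are equal in U (x) W iff every C-bilinear map out of
    U * W (into any C-vector space) takes the same value on them. *)

Definition bilinear_map (U W V : lmodType CC) (f : U -> W -> V) : Prop :=
  (forall w, linear (fun u => f u w)) /\ (forall u, linear (f u)).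

Definition trilinear_map (U W X V : lmodType CC) (f : U -> W -> X -> V) : Prop :=
  [/\ (forall w x, linear (fun u => f u w x)),
      (forall u x, linear (fun w => f u w x)) &
      (forall u w, linear (f u w))].

Definition teq (U W : lmodType CC) (s t : seq (U * W)) : Prop :=
  forall (V : lmodType CC) (f : U -> W -> V), bilinear_map f ->
    \sum_(p <- s) f p.1 p.2 = \sum_(p <- t) f p.1 p.2.

Definition teq3 (U W X : lmodType CC) (s t : seq (U * W * X)) : Prop :=
  forall (V : lmodType CC) (f : U -> W -> X -> V), trilinear_map f ->
    \sum_(p <- s) f p.1.1 p.1.2 p.2 = \sum_(p <- t) f p.1.1 p.1.2 p.2.

Definition tmul (M : comAlgType CC) (s t : seq (M * M)) : seq (M * M) :=
  [seq (p.1 * q.1, p.2 * q.2) | p <- s, q <- t].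

Record cc_hopf_algebra (M : comAlgType CC) (cop : M -> seq (M * M))
    (eps : M -> CC) (S : M -> M) : Prop := {
  cop_linear : forall (k : CC) (a b : M),
      teq (cop (k *: a + b))
          ([seq (k *: p.1, p.2) | p <- cop a] ++ cop b);
  cop_mul : forall a b : M, teq (cop (a * b)) (tmul (cop a) (cop b));
  cop_one : teq (cop 1) [:: (1, 1)];
  cop_coassoc : forall a : M,
      teq3 (flatten [seq [seq (q.1, q.2, p.2) | q <- cop p.1] | p <- cop a])
           (flatten [seq [seq (p.1, q.1, q.2) | q <- cop p.2] | p <- cop a]);
  eps_linear : forall (k : CC) (a b : M), eps (k *: a + b) = k * eps a + eps b;
  eps_mul : forall a b : M, eps (a * b) = eps a * eps b;
  eps_one : eps 1 = 1;
  counit_l : forall a : M, \sum_(p <- cop a) eps p.1 *: p.2 = a;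
  counit_r : forall a : M, \sum_(p <- cop a) eps p.2 *: p.1 = a;
  S_linear : linear S;
  antipode_l : forall a : M, \sum_(p <- cop a) S p.1 * p.2 = (eps a)%:A;
  antipode_r : forall a : M, \sum_(p <- cop a) p.1 * S p.2 = (eps a)%:A;
  cop_cocomm : forall a : M, teq (cop a) [seq (p.2, p.1) | p <- cop a]
}.

Section Bicharacters.
Variables (M A : comAlgType CC) (cop : M -> seq (M * M)) (eps : M -> CC).

Definition bicharacter (r : M -> M -> A) : Prop :=
  [/\ bilinear_map r,
      (forall a : M, r 1 a = (eps a)%:A),
      (forall a : M, r a 1 = (eps a)%:A),
      (forall a b c : M, r (a * b) c = \sum_(q <- cop c) r a q.1 * r b q.2) &
      (forall a b c : M, r a (b * c) = \sum_(p <- cop a) r p.1 b * r p.2 c)].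

Definition conv (r t : M -> M -> A) : M -> M -> A :=
  fun a b => \sum_(p <- cop a) \sum_(q <- cop b) r p.1 q.1 * t p.2 q.2.

Definition transp (r : M -> M -> A) : M -> M -> A := fun a b => r b a.

Definition symmetric_bichar (t : M -> M -> A) : Prop := forall a b, t a b = t b a.

Definition symmetrization (r : M -> M -> A) := conv r (transp r).

(** M_A = M (x)_C A, elements represented by seq (M * A) *)
Definition teqA (x y : seq (M * A)) : Prop := teq x y.

Definition toMA (m : M) : seq (M * A) := [:: (m, 1)].

(** the A-bilinear product on M_A extending a .t b = \sum a'b' t(a'' (x) b'') *)
Definition bullet (t : M -> M -> A) (x y : seq (M * A)) : seq (M * A) :=
  flatten [seq flatten [seq [seq (u.1 * v.1, p.2 * q.2 * t u.2 v.2)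
                             | u <- cop p.1, v <- cop q.1]
                        | q <- y]
          | p <- x].

Definition cop2 (m : M) : seq (M * M * M) :=
  flatten [seq [seq (p.1, q.1, q.2) | q <- cop p.2] | p <- cop m].

Definition EQ (r : M -> M -> A) (m : M) : seq (M * A) :=
  [seq (x.2, r x.1.1 x.1.2) | x <- cop2 m].

Definition EQA (r : M -> M -> A) (x : seq (M * A)) : seq (M * A) :=
  flatten [seq [seq (q.1, p.2 * q.2) | q <- EQ r p.1] | p <- x].

End Bicharacters.

(** Write [rho m = \sum r(m', m'')]. Expanding [r((xy)', (xy)'')] with both
    multiplicativity laws of [r] gives
      [rho(xy) = \sum rho(x') rho(y') s(x'', y'')]    with [s = r o r^t].
    Pairing both sides of the theorem with a bilinear [f : M -> A -> V] and
    using this identity for [xy = a'b'], each side becomes a sum over the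
    fourfold coproducts of [a] and [b] of
      [f(a''b'', rho(a') rho(b') s(a''', b''') s1(a'''', b''''))],
    up to the order of the tensor legs. Coassociativity and cocommutativity
    let the legs of an iterated coproduct be permuted freely. *)
From HB Require Import structures.
From mathcomp Require Import all_boot all_order all_algebra.
From mathcomp Require Import Rstruct complex.
From Stdlib Require Import Morphisms Setoid.
Import GRing.Theory.
Set Implicit Arguments.
Unset Strict Implicit.
Unset Printing Implicit Defensive.
Local Open Scope ring_scope.

Section Linearity.
Variables U V W X : lmodType CC.

Lemma linear_idfun : linear (fun u : U => u).
Proof. by []. Qed.

Lemma linear_mul_const (B : comAlgType CC) (F : U -> B) (c : B) :
  linear F -> linear (fun u => F u * c).
Proof. by move=> HF k u v /=; rewrite HF mulrDl scalerAl. Qed.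

Lemma linear_const_mul (B : comAlgType CC) (F : U -> B) (c : B) :
  linear F -> linear (fun u => c * F u).
Proof. by move=> HF k u v /=; rewrite HF mulrDr scalerAr. Qed.

Lemma linear_bilinear_l (g : W -> X -> V) (F : U -> W) (c : X) :
  bilinear_map g -> linear F -> linear (fun u => g (F u) c).
Proof. by move=> [Hg _] HF k u v /=; rewrite HF Hg. Qed.

Lemma linear_bilinear_r (g : W -> X -> V) (F : U -> X) (c : W) :
  bilinear_map g -> linear F -> linear (fun u => g c (F u)).
Proof. by move=> [_ Hg] HF k u v /=; rewrite HF Hg. Qed.

Lemma linear_sum_fun (I : Type) (s : seq I) (F : I -> U -> V) :
  (forall i, linear (F i)) -> linear (fun u => \sum_(i <- s) F i u).
Proof.
move=> HF k u v /=; under eq_bigr do rewrite HF.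
by rewrite big_split /= scaler_sumr.
Qed.

Lemma linear_eq0 (g : U -> V) : linear g -> g 0 = 0.
Proof.
move=> Hg; have := Hg 1 0 0; rewrite !scale1r addr0 => h.
by apply: (addrI (g 0)); rewrite addr0 -h.
Qed.

Lemma linear_eqZ (g : U -> V) k u : linear g -> g (k *: u) = k *: g u.
Proof. by move=> Hg; have := Hg k u 0; rewrite !addr0 (linear_eq0 Hg) addr0. Qed.

Lemma linear_eq_sum (g : U -> V) (I : Type) (s : seq I) (F : I -> U) :
  linear g -> g (\sum_(i <- s) F i) = \sum_(i <- s) g (F i).
Proof.
move=> Hg; elim: s => [|i s IH]; first by rewrite !big_nil (linear_eq0 Hg).
by rewrite !big_cons -IH -{1}(scale1r (F i)) Hg scale1r.
Qed.

End Linearity.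

Section Sweedler.
Variables (M : comAlgType CC) (cop : M -> seq (M * M)) (eps : M -> CC) (S : M -> M).
Hypothesis HH : cc_hopf_algebra cop eps S.

Definition D (V : lmodType CC) (F : M -> M -> V) (x : M) : V :=
  \sum_(p <- cop x) F p.1 p.2.

Lemma D_ext (V : lmodType CC) (F G : M -> M -> V) x :
  (forall a b, F a b = G a b) -> D F x = D G x.
Proof. by move=> FG; apply: eq_bigr => p _; apply: FG. Qed.

Lemma D_exchange (V : lmodType CC) (F : M -> M -> M -> M -> V) x y :
  D (fun a b => D (F a b) y) x = D (fun c d => D (fun a b => F a b c d) x) y.
Proof. exact: exchange_big. Qed.

Lemma linear_D (V : lmodType CC) (F : M -> M -> V) :
  bilinear_map F -> linear (D F).
Proof.
move=> HF k a b; rewrite /D (cop_linear HH k a b HF) big_cat /= big_map.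
congr (_ + _); rewrite scaler_sumr; apply: eq_bigr => p _.
exact: (linear_eqZ _ _ (HF.1 p.2)).
Qed.

Lemma linear_D_comp (U V : lmodType CC) (F : M -> M -> V) (G : U -> M) :
  bilinear_map F -> linear G -> linear (fun u => D F (G u)).
Proof. by move=> HF HG k u v /=; rewrite HG linear_D. Qed.

Lemma linear_D_param (U V : lmodType CC) (F : U -> M -> M -> V) (y : M) :
  (forall a b, linear (fun u => F u a b)) -> linear (fun u => D (F u) y).
Proof. by move=> HF; apply: linear_sum_fun => p; apply: HF. Qed.

Lemma D_cocomm (V : lmodType CC) (F : M -> M -> V) x :
  bilinear_map F -> D F x = D (fun a b => F b a) x.
Proof. by move=> HF; rewrite /D (cop_cocomm HH x HF) big_map. Qed.

Lemma D_coassoc (V : lmodType CC) (H : M -> M -> M -> V) x :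
  (forall b c, linear (fun a => H a b c)) ->
  (forall a c, linear (fun b => H a b c)) ->
  (forall a b, linear (H a b)) ->
  D (fun p1 p2 => D (fun q1 q2 => H q1 q2 p2) p1) x =
  D (fun p1 p2 => D (fun q1 q2 => H p1 q1 q2) p2) x.
Proof.
move=> H1 H2 H3; have := cop_coassoc HH x (And3 H1 H2 H3).
rewrite !big_flatten /= !big_map /D => coassoc.
transitivity (\sum_(p <- cop x)
    \sum_(i <- [seq (q.1, q.2, p.2) | q <- cop p.1]) H i.1.1 i.1.2 i.2).
  by apply: eq_bigr => p _; rewrite big_map.
by rewrite coassoc; apply: eq_bigr => p _; rewrite big_map.
Qed.

Lemma D_mul (V : lmodType CC) (F : M -> M -> V) x y :
  bilinear_map F ->
  D F (x * y) = D (fun p1 p2 => D (fun q1 q2 => F (p1 * q1) (p2 * q2)) y) x.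
Proof. by move=> HF; rewrite /D (cop_mul HH x y HF) /tmul big_allpairs_dep. Qed.

End Sweedler.

Ltac linearity_step :=
  match goal with
  | |- bilinear_map _ => split
  | |- cc_hopf_algebra _ _ _ => eassumption
  | |- forall _, _ => intros
  | |- _ => first [ assumption
                  | match goal with Hl : forall _, _ |- _ => apply: Hl end
                  | apply: linear_idfun | apply: linear_D_param
                  | match goal with Hg : bilinear_map _ |- _ => apply: (linear_D_comp _ Hg) end
                  | apply: linear_D_comp
                  | apply: linear_mul_const | apply: linear_const_mul
                  | match goal with Hg : bilinear_map _ |- _ => apply: (linear_bilinear_l _ Hg) end
                  | match goal with Hg : bilinear_map _ |- _ => apply: (linear_bilinear_r _ Hg) end
                  | apply: linear_sum_fun ]
  end.
Ltac linearity := repeat linearity_step.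

Section SweedlerPermutations.
Variables (M : comAlgType CC) (cop : M -> seq (M * M)) (eps : M -> CC) (S : M -> M).
Hypothesis HH : cc_hopf_algebra cop eps S.
Variable V : lmodType CC.

Definition D3 (K : M -> M -> M -> V) x :=
  D cop (fun a r => D cop (fun b c => K a b c) r) x.

Lemma D3_swap12 (K : M -> M -> M -> V) x :
  (forall b c, linear (fun a => K a b c)) ->
  (forall a c, linear (fun b => K a b c)) ->
  (forall a b, linear (K a b)) ->
  D3 K x = D3 (fun a b c => K b a c) x.
Proof.
move=> K1 K2 K3; rewrite /D3 -(D_coassoc HH (H := K)) //.
transitivity (D cop (fun p1 p2 => D cop (fun q1 q2 => K q2 q1 p2) p1) x).
  by apply: D_ext => p1 p2; apply: D_cocomm; linearity.
by rewrite (D_coassoc HH (H := fun a b c => K b a c)).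
Qed.

Definition D4 (G : M -> M -> M -> M -> V) x :=
  D cop (fun x1 r1 => D cop (fun x2 r2 => D cop (fun x3 x4 => G x1 x2 x3 x4) r2) r1) x.

Definition D4_balanced (G : M -> M -> M -> M -> V) x :=
  D cop (fun l r => D cop (fun x1 x2 => D cop (fun x3 x4 => G x1 x2 x3 x4) r) l) x.

Definition D4_left (G : M -> M -> M -> M -> V) x :=
  D cop (fun l1 x4 => D cop (fun l2 x3 => D cop (fun x1 x2 => G x1 x2 x3 x4) l2) l1) x.

Lemma D4_ext (F G : M -> M -> M -> M -> V) x :
  (forall x1 x2 x3 x4, F x1 x2 x3 x4 = G x1 x2 x3 x4) -> D4 F x = D4 G x.
Proof. by move=> FG; do 3 apply: D_ext => ? ?; apply: FG. Qed.

Section Multilinear.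
Variable G : M -> M -> M -> M -> V.
Hypotheses (G1 : forall b c d, linear (fun a => G a b c d))
  (G2 : forall a c d, linear (fun b => G a b c d))
  (G3 : forall a b d, linear (fun c => G a b c d))
  (G4 : forall a b c, linear (fun d => G a b c d)).

Lemma D4_balancedE x : D4_balanced G x = D4 G x.
Proof. by rewrite /D4_balanced (D_coassoc HH (H := fun a b z => D cop (G a b) z)); linearity. Qed.

Lemma D4_leftE x : D4_left G x = D4 G x.
Proof.
rewrite /D4_left.
transitivity (D cop (fun l x4 =>
    D cop (fun x1 r => D cop (fun x2 x3 => G x1 x2 x3 x4) r) l) x).
  by apply: D_ext => l x4; rewrite (D_coassoc HH (H := fun a b c => G a b c x4)); linearity.
rewrite (D_coassoc HH (H := fun a b z => D cop (fun x2 x3 => G a x2 x3 z) b)); try by linearity.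
by apply: D_ext => x1 r; rewrite (D_coassoc HH (H := fun a b c => G x1 a b c)); linearity.
Qed.

Lemma D4_swap12 x : D4 G x = D4 (fun a b c d => G b a c d) x.
Proof.
change (D3 (fun a b z => D cop (G a b) z) x = D3 (fun a b z => D cop (G b a) z) x).
by apply: D3_swap12; linearity.
Qed.

Lemma D4_swap23 x : D4 G x = D4 (fun a b c d => G a c b d) x.
Proof.
apply: D_ext => x1 r1.
change (D3 (G x1) r1 = D3 (fun a b c => G x1 b a c) r1).
by apply: D3_swap12; linearity.
Qed.

Lemma D4_swap34 x : D4 G x = D4 (fun a b c d => G a b d c) x.
Proof. by do 2 apply: D_ext => ? ?; rewrite (D_cocomm HH); linearity. Qed.

End Multilinear.
End SweedlerPermutations.

Tactic Notation "exchange_D_at" int_or_var(n) :=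
  eapply eq_trans; [do n (apply: D_ext => ? ?); apply: D_exchange | ].

Tactic Notation "inside_D4" tactic(t) :=
  eapply eq_trans; [apply: D4_ext => ? ? ? ?; t; [reflexivity | try solve [linearity] ..] | ].

Section Bicharacter.
Variables (M A : comAlgType CC) (cop : M -> seq (M * M)) (eps : M -> CC) (S : M -> M).
Hypothesis HH : cc_hopf_algebra cop eps S.

#[local] Instance D_proper (V : lmodType CC) :
  Proper (pointwise_relation M (pointwise_relation M eq) ==> eq ==> eq) (@D M cop V).
Proof. by move=> F G FG x _ <-; apply: D_ext. Qed.

Lemma mulr_Dl (F : M -> M -> A) x c : D cop F x * c = D cop (fun a b => F a b * c) x.
Proof. exact: mulr_suml. Qed.

Lemma mulr_Dr (F : M -> M -> A) x c : c * D cop F x = D cop (fun a b => c * F a b) x.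
Proof. exact: mulr_sumr. Qed.

(* [mulr_Dr] would also match [D cop r a * D cop r b] and expand [rho]
   without end. *)
Lemma mulr2_Dr (F : M -> M -> A) x c1 c2 :
  c1 * c2 * D cop F x = D cop (fun a b => c1 * c2 * F a b) x.
Proof. exact: mulr_sumr. Qed.

Lemma conv_bilinear (t u : M -> M -> A) :
  bilinear_map t -> bilinear_map u -> bilinear_map (conv cop t u).
Proof.
move=> Ht Hu; suff : bilinear_map (fun x y =>
  D cop (fun p1 p2 => D cop (fun q1 q2 => t p1 q1 * u p2 q2) y) x) by [].
by linearity.
Qed.

Variable r : M -> M -> A.
Hypothesis r_bilinear : bilinear_map r.
Hypothesis r_mul_l : forall a b c, r (a * b) c = D cop (fun c1 c2 => r a c1 * r b c2) c.
Hypothesis r_mul_r : forall a b c, r a (b * c) = D cop (fun a1 a2 => r a1 b * r a2 c) a.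

Lemma symmetrizationE x y :
  symmetrization cop r x y = D cop (fun p1 p2 => D cop (fun q1 q2 => r p1 q1 * r q2 p2) y) x.
Proof. by []. Qed.

Lemma symmetrization_bilinear : bilinear_map (symmetrization cop r).
Proof.
apply: conv_bilinear => //.
by split=> [a|b]; [exact: r_bilinear.2 | exact: r_bilinear.1].
Qed.

Lemma D_r_mul a b c d :
  D cop (fun w1 w2 => r a w1 * r b w2) (c * d) =
  D cop (fun c1 c2 => D cop (fun d1 d2 => r a (c1 * d1) * r b (d2 * c2)) d) c.
Proof.
rewrite (D_mul HH); last by linearity.
by apply: D_ext => c1 c2; apply: D_ext => d1 d2; rewrite (mulrC c2).
Qed.

Definition r_expansion x y := D4 cop (fun x1 x2 x3 x4 => D4 cop (fun y1 y2 y3 y4 =>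
  r x1 x2 * r y1 y2 * (r x3 y3 * r y4 x4)) y) x.

Lemma D_r_mul_expansion x y : D cop r (x * y) = r_expansion x y.
Proof.
rewrite (D_mul HH) //.
setoid_rewrite r_mul_l; setoid_rewrite D_r_mul; setoid_rewrite r_mul_r.
repeat setoid_rewrite mulr_Dl; repeat setoid_rewrite mulr_Dr.
exchange_D_at 3; exchange_D_at 2; exchange_D_at 4; exchange_D_at 1; exchange_D_at 2.
match goal with |- _ = ?R =>
  change (D4_balanced cop (fun x1 x2 x3 x4 => D4_balanced cop (fun y1 y2 y3 y4 =>
    r x1 x3 * r x2 y3 * (r y1 y4 * r y2 x4)) y) x = R) end.
rewrite (D4_balancedE HH); try solve [rewrite /D4_balanced; linearity].
inside_D4 (rewrite (D4_balancedE HH)).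
rewrite (D4_swap23 HH); try solve [rewrite /D4; linearity].
inside_D4 (rewrite (D4_swap34 HH)).
inside_D4 (rewrite (D4_swap23 HH)).
inside_D4 (rewrite (D4_swap34 HH)).
by do 2 apply: D4_ext => ? ? ? ? /=; rewrite mulrACA.
Qed.

Lemma D_r_sym_expansion x y :
  D cop (fun x1 x2 => D cop (fun y1 y2 =>
    D cop r x1 * D cop r y1 * symmetrization cop r x2 y2) y) x = r_expansion x y.
Proof.
setoid_rewrite symmetrizationE.
repeat (first [setoid_rewrite mulr_Dl | setoid_rewrite mulr_Dr]).
exchange_D_at 1; exchange_D_at 2; exchange_D_at 4.
match goal with |- _ = ?R =>
  change (D4_balanced cop (fun x1 x2 x3 x4 => D4_balanced cop (fun y1 y2 y3 y4 =>
    r x1 x2 * r y1 y2 * (r x3 y3 * r y4 x4)) y) x = R) end.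
rewrite (D4_balancedE HH); try solve [rewrite /D4_balanced; linearity].
by inside_D4 (rewrite (D4_balancedE HH)).
Qed.

Lemma D_r_mul_sym x y :
  D cop r (x * y) = D cop (fun x1 x2 => D cop (fun y1 y2 =>
    D cop r x1 * D cop r y1 * symmetrization cop r x2 y2) y) x.
Proof. by rewrite D_r_mul_expansion D_r_sym_expansion. Qed.

Variable s1 : M -> M -> A.
Hypothesis s1_bilinear : bilinear_map s1.
Local Notation s2 := (conv cop (symmetrization cop r) s1).
Variables (V : lmodType CC) (f : M -> A -> V).
Hypothesis f_bilinear : bilinear_map f.

Lemma f_D m (F : M -> M -> A) x : f m (D cop F x) = D cop (fun a b => f m (F a b)) x.
Proof. exact/linear_eq_sum/f_bilinear.2. Qed.

Lemma f_mulD m c (F : M -> M -> A) x :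
  f m (c * D cop F x) = D cop (fun a b => f m (c * F a b)) x.
Proof. by rewrite mulr_Dr f_D. Qed.

Lemma EQA_bullet_sum a b :
  \sum_(p <- EQA cop r (bullet cop s1 (toMA A a) (toMA A b))) f p.1 p.2 =
  D cop (fun a1 a2 => D cop (fun b1 b2 =>
    D cop (fun P1 P2 => D cop (fun Q1 Q2 => f Q2 (s1 a2 b2 * r P1 Q1)) P2) (a1 * b1)) b) a.
Proof.
rewrite /EQA /bullet /toMA /EQ /cop2 /= !cats0 !big_allpairs_dep /=.
apply: eq_bigr => u _; apply: eq_bigr => v _.
by rewrite big_map big_allpairs_dep /= !mul1r.
Qed.

Lemma bullet_EQA_sum a b :
  \sum_(p <- bullet cop s2 (EQA cop r (toMA A a)) (EQA cop r (toMA A b))) f p.1 p.2 =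
  D cop (fun P1 P2 => D cop (fun Q1 Q2 => D cop (fun P'1 P'2 => D cop (fun Q'1 Q'2 =>
    D cop (fun a3 a4 => D cop (fun b3 b4 =>
      f (a3 * b3) (r P1 Q1 * r P'1 Q'1 * s2 a4 b4)) Q'2) Q2) P'2) b) P2) a.
Proof.
rewrite /EQA /bullet /toMA /EQ /cop2 /= !cats0.
rewrite big_flatten /= !big_map big_allpairs_dep /=.
apply: eq_bigr => P _; apply: eq_bigr => Q _.
rewrite big_flatten /= !big_map big_allpairs_dep /=.
apply: eq_bigr => P' _; apply: eq_bigr => Q' _.
by rewrite big_allpairs_dep /= !mul1r.
Qed.

Lemma EQA_bullet_expansion a b :
  \sum_(p <- EQA cop r (bullet cop s1 (toMA A a) (toMA A b))) f p.1 p.2 =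
  D4 cop (fun a1 a2 a3 a4 => D4 cop (fun b1 b2 b3 b4 =>
    f (a2 * b2) (s1 a4 b4 * (D cop r a1 * D cop r b1 * symmetrization cop r a3 b3))) b) a.
Proof.
have sym_bilinear := symmetrization_bilinear.
rewrite EQA_bullet_sum.
(* Regroup [Delta^2 (a1 * b1)] so that [D_r_mul_sym] applies. *)
transitivity (D cop (fun a1 a2 => D cop (fun b1 b2 => D cop (fun x1 x2 => D cop (fun y1 y2 =>
    f (x2 * y2) (s1 a2 b2 * D cop r (x1 * y1))) b1) a1) b) a).
  apply: D_ext => a1 a2; apply: D_ext => b1 b2.
  rewrite -(D_coassoc HH (H := fun x y z => f z (s1 a2 b2 * r x y))); try solve [linearity].
  setoid_rewrite <- (f_mulD _ _ r).
  by rewrite (D_mul HH); last by linearity.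
setoid_rewrite D_r_mul_sym.
repeat setoid_rewrite f_mulD.
exchange_D_at 1; exchange_D_at 3; exchange_D_at 2.
match goal with |- _ = ?R =>
  change (D4_left cop (fun x1 x2 x3 x4 => D4_left cop (fun y1 y2 y3 y4 =>
    f (x3 * y3) (s1 x4 y4 * (D cop r x1 * D cop r y1 * symmetrization cop r x2 y2))) b) a = R) end.
rewrite (D4_leftE HH); try solve [rewrite /D4_left; linearity].
inside_D4 (rewrite (D4_leftE HH)).
rewrite (D4_swap23 HH); try solve [rewrite /D4; linearity].
by inside_D4 (rewrite (D4_swap23 HH)).
Qed.

Lemma bullet_EQA_diag a b :
  \sum_(p <- bullet cop s2 (EQA cop r (toMA A a)) (EQA cop r (toMA A b))) f p.1 p.2 =
  D cop (fun a1 a2 => D cop (fun b1 b2 => D cop (fun a3 a4 => D cop (fun b3 b4 =>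
    f (a3 * b3) (D cop r a1 * D cop r b1 * s2 a4 b4)) b2) a2) b) a.
Proof.
have s2_bilinear := conv_bilinear symmetrization_bilinear s1_bilinear.
rewrite bullet_EQA_sum.
(* Coassociativity turns [r(a', a''_1) a''_2] into [r(a'_1, a'_2) a''], i.e. [rho(a') a'']. *)
transitivity (D cop (fun P1 P2 => D cop (fun Q1 Q2 => D cop (fun P'1 P'2 => D cop (fun Q'1 Q'2 =>
    D cop (fun a3 a4 => D cop (fun b3 b4 =>
      f (a3 * b3) (r Q1 Q2 * r Q'1 Q'2 * s2 a4 b4)) P'2) P2) P'1) b) P1) a).
  rewrite -(D_coassoc HH (H := fun x y z => D cop (fun P'1 P'2 => D cop (fun Q'1 Q'2 =>
      D cop (fun a3 a4 => D cop (fun b3 b4 =>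
        f (a3 * b3) (r x y * r P'1 Q'1 * s2 a4 b4)) Q'2) z) P'2) b)); try solve [linearity].
  apply: D_ext => P1 P2; apply: D_ext => Q1 Q2.
  rewrite -(D_coassoc HH (H := fun x y z =>
      D cop (fun a3 a4 => D cop (fun b3 b4 =>
        f (a3 * b3) (r Q1 Q2 * r x y * s2 a4 b4)) z) P2)); try solve [linearity].
  by [].
symmetry.
repeat (first [setoid_rewrite mulr_Dl | setoid_rewrite mulr_Dr]).
repeat setoid_rewrite f_D.
by exchange_D_at 3; exchange_D_at 2; exchange_D_at 1; exchange_D_at 4; exchange_D_at 3.
Qed.

Lemma conv_symmetrizationE x y :
  s2 x y = D cop (fun p1 p2 => D cop (fun q1 q2 =>
    symmetrization cop r p1 q1 * s1 p2 q2) y) x.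
Proof. by []. Qed.

Lemma diag_expansion a b :
  D cop (fun a1 a2 => D cop (fun b1 b2 => D cop (fun a3 a4 => D cop (fun b3 b4 =>
    f (a3 * b3) (D cop r a1 * D cop r b1 * s2 a4 b4)) b2) a2) b) a =
  D4 cop (fun a1 a2 a3 a4 => D4 cop (fun b1 b2 b3 b4 =>
    f (a2 * b2) (D cop r a1 * D cop r b1 * (symmetrization cop r a3 b3 * s1 a4 b4))) b) a.
Proof.
setoid_rewrite conv_symmetrizationE.
repeat (first [setoid_rewrite mulr2_Dr | setoid_rewrite f_D]).
by exchange_D_at 1; exchange_D_at 3; exchange_D_at 2.
Qed.

Lemma EQA_bullet_sum_eq a b :
  \sum_(p <- EQA cop r (bullet cop s1 (toMA A a) (toMA A b))) f p.1 p.2 =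
  \sum_(p <- bullet cop s2 (EQA cop r (toMA A a)) (EQA cop r (toMA A b))) f p.1 p.2.
Proof.
rewrite EQA_bullet_expansion bullet_EQA_diag diag_expansion.
by do 2 apply: D4_ext => ? ? ? ? /=; rewrite [in LHS](mulrC (s1 _ _)) !mulrA.
Qed.

End Bicharacter.

Theorem theorem2p9 (M : comAlgType CC) (cop : M -> seq (M * M))
    (eps : M -> CC) (S : M -> M) (A : comAlgType CC) (r s1 : M -> M -> A) :
  cc_hopf_algebra cop eps S ->
  bicharacter cop eps r ->
  bicharacter cop eps s1 -> symmetric_bichar s1 ->
  let s := symmetrization cop r in
  let s2 := conv cop s s1 in
  forall a b : M,
    teqA (EQA cop r (bullet cop s1 (toMA A a) (toMA A b)))
         (bullet cop s2 (EQA cop r (toMA A a)) (EQA cop r (toMA A b))).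
Proof.
move=> HH [r_bilinear _ _ r_mul_l r_mul_r] [s1_bilinear _ _ _ _] _ s s2 a b V f f_bilinear.
exact: (EQA_bullet_sum_eq HH r_bilinear r_mul_l r_mul_r s1_bilinear f_bilinear).
Qed.
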